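(* Let $\kappa\ge3$. For any GTR parameters $\boldsymbol\pi,Q$ and any matrix $U$ diagonalizing $Q$ as in the context, there exist indices $i,j,k\in\{2,\dots,\kappa\}$ with $\nu_{ijk}\neq0$.
   Context: $\boldsymbol\pi=(\pi_1,\dots,\pi_\kappa)$ with $\pi_i>0$ and $\sum\pi_i=1$; $Q$ a $\kappa\times\kappa$ matrix with positive off-diagonal entries, zero row sums and $\operatorname{diag}(\boldsymbol\pi)Q$ symmetric. $U$ is a real matrix with $Q=U\operatorname{diag}(0,\lambda_2,\dots,\lambda_\kappa)U^{-1}$, $0>\lambda_2\ge\dots\ge\lambda_\kappa$, $UU^T=\operatorname{diag}(\boldsymbol\pi)^{-1}$ (equivalently $U^T\operatorname{diag}(\boldsymbol\pi)U=I$), and first column $\mathbf 1$. $\nu_{ijk}=\sum_l\pi_lU_{li}U_{lj}U_{lk}$. *)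

From HB Require Import structures.
From mathcomp Require Import all_boot all_order all_algebra.
Set Implicit Arguments. Unset Strict Implicit. Unset Printing Implicit Defensive.
Import Order.TTheory GRing.Theory Num.Theory.
Local Open Scope ring_scope.

(* nu_{ijl} = \sum_m pi_m U_{mi} U_{mj} U_{ml}; pi is a row vector,
   indices are 0-based ('I_k), so paper index 1 is Rocq index 0. *)
Definition nu (R : nzRingType) (k : nat) (pi : 'rV[R]_k) (U : 'M[R]_k)
  (i j l : 'I_k) : R :=
  \sum_(m < k) pi 0 m * U m i * U m j * U m l.

From HB Require Import structures.
From mathcomp Require Import all_boot all_order all_algebra.
Import Order.TTheory GRing.Theory Num.Theory.
Local Open Scope ring_scope.

(* Only two of the hypotheses matter: the columns U_0, ..., U_{k-1}
   of U are orthonormal for the weighted inner product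
   <f, g>_pi = \sum_m pi_m f_m g_m (i.e. U^T diag(pi) U = 1), and U_0 is the
   constant vector 1.  Orthonormality makes the columns a basis, so every
   vector g is the sum of its coordinates <g, U_c>_pi U_c.  Expanding the
   pointwise product U_p U_q (p, q > 0) this way, the coefficient on U_0 is
   <U_p, U_q>_pi = delta_pq and the coefficient on U_c (c > 0) is nu_pqc.
   Hence, if all nu_pqc with positive indices vanished, U_p U_q would be the
   constant delta_pq; with k >= 3 this gives U_1^2 = 1 and U_1 U_2 = 0, so
   U_2 = 0, contradicting <U_2, U_2>_pi = 1.
   The file proves the coordinate expansion, rewrites nu as a coordinate,
   derives the constancy of the products U_p U_q, and concludes. *)

Definition pdot {R : nzRingType} {k : nat} (pi : 'rV[R]_k) (f g : 'I_k -> R) : R :=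
  \sum_(m < k) pi 0 m * f m * g m.

Section OrthonormalColumns.

Variables (R : comUnitRingType) (k : nat) (pi : 'rV[R]_k) (U : 'M[R]_k).

Hypothesis orthonormal : U^T *m diag_mx pi *m U = 1%:M.

Lemma gram_entry (i j : 'I_k) :
  (U^T *m diag_mx pi *m U) i j = pdot pi (fun m => U m i) (fun m => U m j).
Proof.
rewrite mxE; apply: eq_bigr => m _.
by rewrite mul_mx_diag !mxE (mulrC (U m i)).
Qed.

Lemma pdot_columns (i j : 'I_k) :
  pdot pi (fun m => U m i) (fun m => U m j) = (i == j)%:R.
Proof. by rewrite -gram_entry orthonormal mxE. Qed.

Lemma coordinate_expansion (g : 'I_k -> R) (l : 'I_k) :
  g l = \sum_(c < k) pdot pi g (fun m => U m c) * U l c.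
Proof.
have right_inv : U *m (U^T *m diag_mx pi) = 1%:M.
  exact: mulmx1C.
pose G := \col_m g m.
have : G = U *m (U^T *m diag_mx pi *m G).
  by rewrite [RHS]mulmxA right_inv mul1mx.
move/(congr1 (fun A : 'cV[R]_k => A l 0)); rewrite !mxE => ->.
apply: eq_bigr => c _; rewrite mulrC; congr (_ * _).
rewrite mxE; apply: eq_bigr => m _.
by rewrite /G mul_mx_diag !mxE [RHS]mulrC mulrA.
Qed.

Lemma nu_pdot (i j l : 'I_k) :
  nu pi U i j l = pdot pi (fun m => U m i * U m j) (fun m => U m l).
Proof. by apply: eq_bigr => m _; rewrite mulrA. Qed.

Hypothesis first_column_one : forall m i : 'I_k, nat_of_ord i = 0%N -> U m i = 1.

Lemma column_products_constant :
  (forall i j l : 'I_k, (0 < i)%N -> (0 < j)%N -> (0 < l)%N -> nu pi U i j l = 0) ->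
  forall p q l : 'I_k, (0 < p)%N -> (0 < q)%N -> U l p * U l q = (p == q)%:R.
Proof.
move=> nu0 p q l hp hq.
have k_gt0 : (0 < k)%N by apply: leq_ltn_trans (ltn_ord p).
pose z := Ordinal k_gt0.
rewrite (coordinate_expansion (fun m => U m p * U m q)) (bigD1 z) //=.
rewrite [X in _ + X]big1 ?addr0 => [|c c_neq_z].
  rewrite first_column_one // mulr1 -(pdot_columns p q).
  by apply: eq_bigr => m _ /=; rewrite (first_column_one m z) // mulr1 mulrA.
have c_gt0 : (0 < c)%N.
  by rewrite lt0n; apply: contra c_neq_z => /eqP c0; apply/eqP/val_inj.
by rewrite -nu_pdot nu0 ?mul0r.
Qed.

(* With at least three states the nu with positive indices cannot all vanish:
   otherwise U_1^2 = 1 and U_1 U_2 = 0 force U_2 = 0, which has pi-norm 0. *)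
Lemma nu_not_all_zero : (3 <= k)%N ->
  ~ (forall i j l : 'I_k, (0 < i)%N -> (0 < j)%N -> (0 < l)%N -> nu pi U i j l = 0).
Proof.
move=> k_ge3 nu0.
pose i1 := Ordinal (leq_trans (isT : (1 < 3)%N) k_ge3).
pose i2 := Ordinal (leq_trans (isT : (2 < 3)%N) k_ge3).
have U2_zero l : U l i2 = 0.
  have sq1 : U l i1 * U l i1 = 1 by rewrite column_products_constant ?eqxx.
  have prod0 : U l i1 * U l i2 = 0 by rewrite column_products_constant.
  by rewrite -[U l i2]mul1r -sq1 -mulrA prod0 mulr0.
have := pdot_columns i2 i2; rewrite eqxx /pdot big1 => [/eqP|m _].
  by rewrite eq_sym oner_eq0.
by rewrite U2_zero mulr0.
Qed.

Lemma exists_nonzero_nu : (3 <= k)%N ->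
  exists i j l : 'I_k,
    [/\ (0 < i)%N, (0 < j)%N, (0 < l)%N & nu pi U i j l != 0].
Proof.
move=> k_ge3.
pose nonzero (t : 'I_k * 'I_k * 'I_k) :=
  [&& (0 < t.1.1)%N, (0 < t.1.2)%N, (0 < t.2)%N & nu pi U t.1.1 t.1.2 t.2 != 0].
have [[[i j] l] /and4P[hi hj hl nz] | none] := pickP nonzero.
  by exists i, j, l.
case: (nu_not_all_zero k_ge3) => i j l hi hj hl.
by have := none (i, j, l); rewrite /nonzero /= hi hj hl => /negbFE/eqP.
Qed.

End OrthonormalColumns.

(* Proposition 2: only the pi-orthonormality of the columns of U and the
   constancy of its first column are needed. *)
Theorem proposition2 (R : realFieldType) (k : nat) (hk : (3 <= k)%N)
  (pi : 'rV[R]_k) (Q U : 'M[R]_k) (lam : 'rV[R]_k) :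
  (forall i, 0 < pi 0 i) ->
  \sum_(i < k) pi 0 i = 1 ->
  (forall i j : 'I_k, i != j -> 0 < Q i j) ->
  (forall i : 'I_k, \sum_(j < k) Q i j = 0) ->
  (diag_mx pi *m Q)^T = diag_mx pi *m Q ->
  (forall i : 'I_k, nat_of_ord i = 0%N -> lam 0 i = 0) ->
  (forall i : 'I_k, (0 < i)%N -> lam 0 i < 0) ->
  (forall i j : 'I_k, (0 < i)%N -> (i <= j)%N -> lam 0 j <= lam 0 i) ->
  U \in unitmx ->
  Q = U *m diag_mx lam *m invmx U ->
  U^T *m diag_mx pi *m U = 1%:M ->
  (forall m i : 'I_k, nat_of_ord i = 0%N -> U m i = 1) ->
  exists i j l : 'I_k,
    [/\ (0 < i)%N, (0 < j)%N, (0 < l)%N & nu pi U i j l != 0].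
Proof.
move=> _ _ _ _ _ _ _ _ _ _ orthonormal first_column_one.
exact: exists_nonzero_nu orthonormal first_column_one hk.
Qed.
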